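(* Let $G$ be a finite group and $H \leqslant G$. If $|HP|$ divides $|G|$ for every Sylow subgroup $P$ of $G$ (for every prime), then $|HK|$ divides $|G|$ for every subgroup $K \leqslant G$.
   Context: For subgroups $A,B$, $AB$ denotes the product set $\{ab : a \in A, b \in B\}$. *)

From mathcomp Require Import all_boot all_fingroup all_solvable.
From mathcomp Require Import pgroup.

(** For a prime p it suffices to show that the p-part of |HK| = |H||K|/|H ∩ K|
    is at most that of |G|.  Pick a Sylow p-subgroup S of K and a Sylow
    p-subgroup P of G containing S.  The hypothesis |HP| | |G| forces H ∩ P to
    have the full p-part of |H|, and the product (H ∩ P)S lies inside the
    p-group P, whence |H ∩ P||S| <= |P||H ∩ P ∩ S| <= |P||H ∩ K| at every
    p-adic valuation. *)

From mathcomp Require Import all_boot all_fingroup all_solvable.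
From mathcomp Require Import pgroup.

Set Implicit Arguments.
Unset Strict Implicit.
Unset Printing Implicit Defensive.

Lemma dvdn_logn m n :
  0 < m -> 0 < n -> (forall p, prime p -> logn p m <= logn p n) -> m %| n.
Proof.
move=> m_gt0 n_gt0 le_mn; apply/dvdn_partP => // p.
rewrite mem_primes => /andP[p_pr _].
by rewrite p_part pfactor_dvdn // le_mn.
Qed.

Section ProductCard.

Variable gT : finGroupType.
Implicit Types (A B G H K P S : {group gT}).
Local Open Scope group_scope.

Lemma cardMg_gt0 A B : 0 < #|A * B|.
Proof. by apply/card_gt0P; exists 1; rewrite -[1]mulg1 mem_mulg. Qed.

Lemma logn_cardMg p A B :
  logn p #|A * B| + logn p #|A :&: B| = logn p #|A| + logn p #|B|.
Proof. by rewrite -!lognM ?cardMg_gt0 ?cardG_gt0 // mul_cardG. Qed.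

Lemma logn_card_Sylow p G P :
  prime p -> p.-Sylow(G) P -> logn p #|P| = logn p #|G|.
Proof. by move=> p_pr sylP; rewrite (card_Hall sylP) p_part pfactorK. Qed.

Lemma logn_cardMg_pgroup (p : nat) P A B :
  p.-group P -> A \subset P -> B \subset P ->
  logn p #|A| + logn p #|B| <= logn p #|P| + logn p #|A :&: B|.
Proof.
move=> pP sAP sBP; rewrite -logn_cardMg leq_add2r.
have sABP : A * B \subset P by rewrite mul_subG.
have pAB : p.-group (A * B) by rewrite pgroupM (pgroupS sAP) ?(pgroupS sBP).
have le_AB_P : #|A * B| <= #|P| := subset_leq_card sABP.
have [p_gt1 | p_le1] := leqP 2 p.
  by rewrite -(part_pnat_id pAB) -(part_pnat_id pP) !p_part leq_exp2l in le_AB_P.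
by case: p p_le1 {pP pAB} => [|[|]].
Qed.

Lemma logn_setI_Sylow p G H P :
  prime p -> p.-Sylow(G) P -> #|(H * P)%g| %| #|G| ->
  logn p #|H :&: P| = logn p #|H|.
Proof.
move=> p_pr sylP dvd_HP_G; apply/eqP.
rewrite eqn_leq dvdn_leq_log ?cardSg ?subsetIl //=.
rewrite -(leq_add2r (logn p #|G|)) -(logn_card_Sylow p_pr sylP) -logn_cardMg.
by rewrite addnC leq_add2l (logn_card_Sylow p_pr sylP) dvdn_leq_log.
Qed.

Lemma logn_cardMg_le_Sylow p G H K P S :
  prime p -> p.-Sylow(G) P -> p.-Sylow(K) S -> S \subset P ->
  logn p #|H :&: P| = logn p #|H| ->
  logn p #|H * K| <= logn p #|G|.
Proof.
move=> p_pr sylP sylS sSP lHP_H.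
have sSK := pHall_sub sylS.
have le_HPS : logn p #|H :&: P :&: S| <= logn p #|H :&: K|.
  by rewrite dvdn_leq_log ?cardSg // (subset_trans (setSI S (subsetIl H P))) ?setIS.
have := logn_cardMg_pgroup (pHall_pgroup sylP) (subsetIr H P) sSP.
rewrite lHP_H (logn_card_Sylow p_pr sylP) (logn_card_Sylow p_pr sylS) => le_HK.
rewrite -(leq_add2r (logn p #|H :&: K|)) logn_cardMg.
by apply: leq_trans le_HK _; rewrite leq_add2l.
Qed.

End ProductCard.

Theorem mainTheorem10 (gT : finGroupType) (G H : {group gT}) :
  H \subset G ->
  (forall (p : nat) (P : {group gT}), prime p -> P \in ('Syl_p(G))%g ->
     (#|(H * P)%g| %| #|G|)%N) ->
  forall K : {group gT}, K \subset G -> (#|(H * K)%g| %| #|G|)%N.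
Proof.
move=> _ dvd_HP_G K sKG.
apply: dvdn_logn; rewrite ?cardMg_gt0 ?cardG_gt0 // => p p_pr.
have [S sylS] := Sylow_exists p K.
have sSG := subset_trans (pHall_sub sylS) sKG.
have [P sylP sSP] := Sylow_superset sSG (pHall_pgroup sylS).
have P_Syl : P \in ('Syl_p(G))%g by rewrite inE.
have lHP_H := logn_setI_Sylow p_pr sylP (dvd_HP_G p P p_pr P_Syl).
exact: logn_cardMg_le_Sylow p_pr sylP sylS sSP lHP_H.
Qed.
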